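(* Let $w\in\{0,1\}^n$ and $b\in\{0,1\}$. Let $F\vdash w$ and $F'\vdash wb$ be the closed forks built by the strategy $\mathcal{A}^*$ (on input $wb$, after processing $w$ and $wb$ respectively), so that $F\sqsubseteq F'$, and suppose in addition that $F$ is canonical. Then $F'$ is canonical.
   Context: Characteristic strings and forks. A characteristic string is $w=w_1\dots w_n\in\{0,1\}^n$; index $i$ is honest if $w_i=0$ and adversarial if $w_i=1$. A fork for $w$ is a rooted tree with edges directed away from the root $r$ and labeling $\ell:V\to\{0,\dots,n\}$ with (F1) $\ell(r)=0$; (F2) labels strictly increasing along directed paths; (F3) each honest index labels exactly one vertex; (F4) for honest $i<j$ the vertex labeled $i$ has strictly smaller depth than the vertex labeled $j$. Write $F\vdash w$. A vertex is honest if it is the root or labeled by an honest index; a tine is a directed path from the root, honest if its last vertex is honest; its length is its number of edges, $\ell(t)$ the label of its last vertex; $\mathrm{height}(F)$ is the maximal tine length. For tines $t_1,t_2$, $t_1\cap t_2$ is their longest common prefix. For $x$ a prefix of $w$, $F\vdash x$, $F'\vdash w$, $F\sqsubseteq F'$ means $F$ is a consistently labeled subgraph of $F'$. A fork is closed if every leaf is honest; a closed fork has a unique longest tine $\hat t$. Reach and relative margin. For closed $F\vdash w$ and tine $t$: $\mathrm{gap}(t)=\mathrm{length}(\hat t)-\mathrm{length}(t)$, $\mathrm{reserve}(t)=|\{i:w_i=1,\ i>\ell(t)\}|$, $\mathrm{reach}(t)=\mathrm{reserve}(t)-\mathrm{gap}(t)$; $\rho(F)=\max_t\mathrm{reach}(t)$,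 $\rho(w)=\max\{\rho(F):F\vdash w\text{ closed}\}$. For $w=xy$, tines are disjoint over $y$ if they share no edge terminating at a vertex with label $>|x|$ (a tine may be paired with itself). $\mu_x(F)=\max\min\{\mathrm{reach}(t_1),\mathrm{reach}(t_2)\}$ over pairs disjoint over $y$, and $\mu_x(y)=\max\{\mu_x(F):F\vdash xy\text{ closed}\}$. A pair $(t_\rho,t_x)$ of tines of $F\vdash xy$ witnesses $\mu_x(F)$ if they are disjoint over $y$, $\mathrm{reach}(t_\rho)=\rho(F)$ and $\mathrm{reach}(t_x)=\mu_x(F)$. Canonical forks. The trivial fork (single root vertex) is canonical for the empty string. For $n\ge1$, a fork $F_n$ for $w=w_1\dots w_n$ is canonical if it is closed, $F_{n-1}\sqsubseteq F_n$ for a canonical fork $F_{n-1}$ for $w_1\dots w_{n-1}$, $F_n$ contains an honest tine $\tau_\rho$ with $\mathrm{reach}(\tau_\rho)=\rho(F_n)=\rho(w)$, and for every decomposition $w=xy$ with $x$ a strict prefix of $w$, $F_n$ contains two honest tines $\tau_{\rho x},\tau_x$ such that $(\tau_{\rho x},\tau_x)$ witnesses $\mu_x(F_n)$ and $\mu_x(F_n)=\mu_x(y)$. Conservative extension. For closed $F\vdash w$ and a tine $s$ of $F$, a conservative extension of $s$ is a closed fork $F'\vdash w0$ with $F\sqsubseteq F'$ obtained by adding to $F$ a new honest tine $\sigma$ with $\ell(\sigma)=|w|+1$, $s$ a prefix of $\sigma$, and $\mathrm{length}(\sigma)=\mathrm{height}(F)+1$ (the new vertices between $s$ and the final vertex are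 labeled by adversarial indices). Strategy $\mathcal{A}^*$. Let $\le_\pi$ be the lexicographic order on tines, each represented by the list of its vertex labels from the root (ties broken arbitrarily but consistently). On input $w_1w_2\dots$, $F_0$ is the trivial fork. Given $F_n\vdash w_1\dots w_n$: if $w_{n+1}=1$, set $F_{n+1}=F_n$; if $w_{n+1}=0$, $F_{n+1}$ is a conservative extension of a tine $s\in F_n$ chosen as follows: if $F_n$ has no tine of reach $0$, $s$ is the unique longest tine of $F_n$; otherwise $s$ is the reach-zero tine that diverges earliest from the set of maximal-reach tines of $F_n$ (i.e., minimizes $\ell(s\cap r)$ over maximal-reach tines $r$), ties broken by smallest $\le_\pi$-rank. *)

From mathcomp Require Import all_boot all_order all_algebra.
Set Implicit Arguments. Unset Strict Implicit. Unset Printing Implicit Defensive.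
Import Order.TTheory GRing.Theory Num.Theory.

(* Characteristic strings: w : seq bool, w_i (1 <= i <= size w) is          *)
(* nth false w i.-1 ; true = 1 = adversarial, false = 0 = honest.           *)
Definition wbit (w : seq bool) (i : nat) : bool := nth false w i.-1.
Definition honest_idx (w : seq bool) (i : nat) : bool :=
  (0 < i <= size w) && ~~ wbit w i.
Definition adv_idx (w : seq bool) (i : nat) : bool :=
  (0 < i <= size w) && wbit w i.

(* A labelled rooted tree: vertices are 0, ..., nv-1, the root is 0, every  *)
(* vertex v >= 1 has parent par v < v (edges are directed away from the     *)
(* root), lab v is the label of v. Values of par/lab outside the vertex set *)
(* (and par 0) are irrelevant junk.                                         *)
Record fork := Fork { nv : nat; par : nat -> nat; lab : nat -> nat }.

Definition trivial_fork : fork := Fork 1 (fun _ => 0) (fun _ => 0).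

Fixpoint depth_aux (p : nat -> nat) (fuel v : nat) : nat :=
  match fuel with
  | 0 => 0
  | fuel'.+1 => if v == 0 then 0 else (depth_aux p fuel' (p v)).+1
  end.

(* depth of v = length (number of edges) of the tine ending at v *)
Definition depth (F : fork) (v : nat) : nat := depth_aux (par F) v v.

Definition path_up (F : fork) (v : nat) : seq nat :=
  [seq iter k (par F) v | k <- iota 0 (depth F v).+1].

Definition anc (F : fork) (u v : nat) : bool := u \in path_up F v.

(* last vertex of the longest common prefix t_u \cap t_v *)
Definition lca (F : fork) (u v : nat) : nat :=
  nth 0 [seq x <- path_up F u | anc F x v] 0.

Definition tine_labels (F : fork) (v : nat) : seq nat :=
  rev (map (lab F) (path_up F v)).

Definition height (F : fork) : nat := \max_(v < nv F) depth F v.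

Definition valid_fork (w : seq bool) (F : fork) : Prop :=
  [/\ 0 < nv F,
      lab F 0 = 0,
      (forall v, 0 < v < nv F ->
         [/\ par F v < v, lab F (par F v) < lab F v & lab F v <= size w]),
      (forall i, honest_idx w i ->
         count (fun v => lab F v == i) (iota 0 (nv F)) = 1)
    & (forall u v, u < nv F -> v < nv F ->
         honest_idx w (lab F u) -> honest_idx w (lab F v) ->
         lab F u < lab F v -> depth F u < depth F v)].

Definition honest_vertex (w : seq bool) (F : fork) (v : nat) : bool :=
  (v == 0) || honest_idx w (lab F v).

Definition closed (w : seq bool) (F : fork) : Prop :=
  forall v, v < nv F ->
    (forall u, 0 < u < nv F -> par F u <> v) -> honest_vertex w F v.

Definition subfork (G F : fork) : Prop :=
  exists f : nat -> nat,
    [/\ f 0 = 0,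
        (forall v, v < nv G -> f v < nv F),
        (forall u v, u < nv G -> v < nv G -> f u = f v -> u = v),
        (forall v, v < nv G -> lab F (f v) = lab G v)
      & (forall v, 0 < v < nv G -> par F (f v) = f (par G v))].

Definition gap (F : fork) (t : nat) : nat := height F - depth F t.

Definition reserve (w : seq bool) (F : fork) (t : nat) : nat :=
  count (fun i => wbit w i) (iota (lab F t).+1 (size w - lab F t)).

Definition reach (w : seq bool) (F : fork) (t : nat) : int :=
  (reserve w F t)%:Z - (gap F t)%:Z.

Definition rhoF (w : seq bool) (F : fork) : int :=
  \big[Order.max/reach w F 0]_(v < nv F) reach w F v.

Definition is_rho (w : seq bool) (r : int) : Prop :=
  (exists G, [/\ valid_fork w G, closed w G & rhoF w G = r]) /\
  (forall G, valid_fork w G -> closed w G -> (rhoF w G <= r)%R).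

(* tines u, v are disjoint over y, where w = xy and k = |x| *)
Definition disjoint_over (F : fork) (k : nat) (u v : nat) : bool :=
  all (fun x => (x == 0) || (lab F x <= k)) [seq x <- path_up F u | anc F x v].

(* mu_x(F), with k = |x| (the pair (root,root) is always disjoint over y) *)
Definition muF (w : seq bool) (k : nat) (F : fork) : int :=
  \big[Order.max/reach w F 0]_(u < nv F)
    \big[Order.max/reach w F 0]_(v < nv F | disjoint_over F k u v)
       Order.min (reach w F u) (reach w F v).

Definition is_mu (w : seq bool) (k : nat) (r : int) : Prop :=
  (exists G, [/\ valid_fork w G, closed w G & muF w k G = r]) /\
  (forall G, valid_fork w G -> closed w G -> (muF w k G <= r)%R).

Fixpoint canon (w : seq bool) (n : nat) (F : fork) : Prop :=
  match n with
  | 0 => valid_fork [::] F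
  | m.+1 =>
    let x := take n w in
    [/\ valid_fork x F /\ closed x F,
        (exists G, canon w m G /\ subfork G F),
        (exists t, [/\ t < nv F, honest_vertex x F t & reach x F t = rhoF x F]),
        is_rho x (rhoF x F)
      & (forall k, k < n ->
          exists t1 t2,
            t1 < nv F /\ t2 < nv F /\
            honest_vertex x F t1 /\ honest_vertex x F t2 /\
            disjoint_over F k t1 t2 /\
            reach x F t1 = rhoF x F /\
            reach x F t2 = muF x k F /\
            is_mu x k (muF x k F))]
  end.

Definition canonical (w : seq bool) (F : fork) : Prop := canon w (size w) F.

Definition cons_ext (w : seq bool) (F : fork) (s : nat) (F' : fork) : Prop :=
  exists m : nat,
    nv F' = nv F + m.+1 /\
    (forall v, v < nv F -> lab F' v = lab F v) /\
    (forall v, 0 < v < nv F -> par F' v = par F v) /\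
    par F' (nv F) = s /\
    (forall j, 0 < j <= m -> par F' (nv F + j) = (nv F + j).-1) /\
    (forall j, j < m -> adv_idx w (lab F' (nv F + j))) /\
    lab F' (nv F + m) = (size w).+1 /\
    depth F' (nv F + m) = (height F).+1 /\
    valid_fork (rcons w false) F' /\
    closed (rcons w false) F'.

Fixpoint lex_le (s t : seq nat) : bool :=
  match s, t with
  | [::], _ => true
  | _ :: _, [::] => false
  | a :: s', b :: t' => (a < b) || ((a == b) && lex_le s' t')
  end.

Definition diverge (w : seq bool) (F : fork) (s : nat) : nat :=
  \big[minn/size w]_(r < nv F | reach w F r == rhoF w F) lab F (lca F s r).

Definition astar_select (w : seq bool) (F : fork) (s : nat) : Prop :=
  if has (fun v => reach w F v == 0%R) (iota 0 (nv F)) then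
    [/\ reach w F s = 0%R,
        (forall s', s' < nv F -> reach w F s' = 0%R -> diverge w F s <= diverge w F s')
      & (forall s', s' < nv F -> reach w F s' = 0%R ->
           diverge w F s' = diverge w F s -> lex_le (tine_labels F s) (tine_labels F s'))]
  else depth F s = height F.

Definition astar_step (w : seq bool) (F : fork) (b : bool) (F' : fork) : Prop :=
  if b then F' = F
  else exists s, [/\ s < nv F, astar_select w F s & cons_ext w F s F'].

Inductive astar_run : seq bool -> fork -> Prop :=
| astar_run0 : astar_run [::] trivial_fork
| astar_runS w F b F' :
    astar_run w F -> astar_step w F b F' -> astar_run (rcons w b) F'.

(* The earlier levels of canonicity are inherited through F [= F', so only the
   optimality conditions for wb itself need proof.

   For an adversarial symbol, every tine gains one unit of reserve, so reach, rho and
   every mu_x grow by one; a closed fork for w1 cannot use the last label (it would be an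
   adversarial leaf), so it is a closed fork for w, and the old witnesses remain optimal.
   For x = w, the tine realising rho is disjoint from itself over the empty suffix.

   For an honest symbol, the conservative extension lowers the reach of every old tine
   by one and adds an honest tine of reach 0.  Optimality comes from a deletion argument:
   in any fork G for w0, keep only the ancestors of the vertices that are honest for w.
   This is a closed fork for w; every tine of G except the new honest one projects to a
   tine of it with at least one more unit of reach, and disjointness over y survives
   the projection.  Hence rho(w0) <= max(rho(w) - 1, 0), and mu_x(y0) <= mu_x(y) - 1
   unless mu_x(y) = 0 < rho(w), where mu_x(y0) <= 0.  The old witnesses attain these
   bounds except when mu_x(y) = 0 < rho(w) or rho(w) = 0; there the tine chosen by A*,
   a reach-zero tine diverging earliest from the maximal ones, makes the new tine
   disjoint over y from a maximal tine or from the mu witness. *)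

From Pilot Require Import Defs.
From mathcomp Require Import all_boot all_order all_algebra zify.
Set Implicit Arguments. Unset Strict Implicit. Unset Printing Implicit Defensive.
Import Order.TTheory GRing.Theory Num.Theory.
Notation closed := Defs.closed. (* not fingraph's [closed] *)

(** * Tines *)

Definition rooted (F : fork) : Prop :=
  0 < nv F /\ forall v, 0 < v < nv F -> par F v < v.

Lemma depth_aux_fuel (p : nat -> nat) N :
  (forall x, 0 < x < N -> p x < x) ->
  forall fuel fuel' v, v < N -> v <= fuel -> v <= fuel' ->
  depth_aux p fuel v = depth_aux p fuel' v.
Proof.
move=> Hp; elim=> [|f IH] [|f'] v vN h1 h2 //=.
- by move: h1; rewrite leqn0 => /eqP ->.
- by move: h2; rewrite leqn0 => /eqP ->.
case: eqP => // /eqP v0; congr S; apply: IH; have := Hp v; lia.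
Qed.

Lemma depth_root F : depth F 0 = 0. Proof. by []. Qed.

Lemma depth_par F v : rooted F -> 0 < v < nv F -> depth F v = (depth F (par F v)).+1.
Proof.
move=> [_ Hpar] Hv; rewrite /depth; case: v Hv => [|v] Hv //=.
congr S; apply: (@depth_aux_fuel _ (nv F)) => //; have := Hpar _ Hv; lia.
Qed.

Lemma map_iter_iotaS (f : nat -> nat) v n :
  [seq iter k f v | k <- iota 0 n.+1] = v :: [seq iter k f (f v) | k <- iota 0 n].
Proof.
rewrite /= -[iota 1 n]/(iota (1 + 0) n) iotaDl -map_comp; congr cons.
by apply: eq_map => k /=; rewrite add0n -iterS iterSr.
Qed.

Lemma path_up_root F : path_up F 0 = [:: 0].
Proof. by []. Qed.

Lemma path_up_par F v : rooted F -> 0 < v < nv F -> path_up F v = v :: path_up F (par F v).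
Proof. by move=> HF Hv; rewrite /path_up (depth_par HF Hv) map_iter_iotaS. Qed.

Section TreePaths.
Variable F : fork.
Hypothesis HF : rooted F.

Lemma par_lt v : 0 < v < nv F -> par F v < v.
Proof. exact: HF.2. Qed.

Lemma path_up_self v : v \in path_up F v.
Proof. by rewrite /path_up /= inE eqxx. Qed.

Lemma mem_path_up_root x : x \in path_up F 0 -> x = 0.
Proof. by rewrite path_up_root mem_seq1 => /eqP. Qed.

Lemma path_up_parP v x : 0 < v < nv F -> x \in path_up F v ->
  x = v \/ x \in path_up F (par F v).
Proof. by move=> Hv; rewrite (path_up_par HF Hv) in_cons => /orP [/eqP|]; auto. Qed.

Lemma mem_path_up_par v x : 0 < v < nv F -> x \in path_up F (par F v) -> x \in path_up F v.
Proof. by move=> Hv Hx; rewrite (path_up_par HF Hv) in_cons Hx orbT. Qed.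

Lemma path_up_lt v x : v < nv F -> x \in path_up F v -> x < nv F.
Proof.
elim/ltn_ind: v => v IH Hv Hx.
case: (posnP v) => [E|H0]; first by move: Hx; rewrite E => /mem_path_up_root ->; exact: HF.1.
have Hv' : 0 < v < nv F by rewrite H0.
have Hp := par_lt Hv'; case: (path_up_parP Hv' Hx) => [->//|]; apply: (IH _ Hp); lia.
Qed.

Lemma root_in_path_up v : v < nv F -> 0 \in path_up F v.
Proof.
elim/ltn_ind: v => v IH Hv.
case: (posnP v) => [->|H0]; first exact: path_up_self.
have Hv' : 0 < v < nv F by rewrite H0.
have Hp := par_lt Hv'; apply: mem_path_up_par => //; apply: (IH _ Hp); lia.
Qed.

Lemma path_up_trans v a x : v < nv F -> a \in path_up F v -> x \in path_up F a ->
  x \in path_up F v.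
Proof.
elim/ltn_ind: v a x => v IH a x Hv Ha Hx.
case: (posnP v) => [E|H0]; first by move: Ha; rewrite E => /mem_path_up_root E'; subst.
have Hv' : 0 < v < nv F by rewrite H0.
case: (path_up_parP Hv' Ha) => [E|Ha']; first by rewrite -E.
apply: mem_path_up_par => //; have Hp := par_lt Hv'; apply: (IH _ Hp a) => //; lia.
Qed.

Lemma depth_path_up_lt v x : v < nv F -> x \in path_up F v -> x != v ->
  depth F x < depth F v.
Proof.
elim/ltn_ind: v x => v IH x Hv Hx Hne.
case: (posnP v) => [E|H0]; first by move: Hx Hne; rewrite E => /mem_path_up_root ->.
have Hv' : 0 < v < nv F by rewrite H0.
rewrite (depth_par HF Hv'); case: (path_up_parP Hv' Hx) => [E|Hx'].
  by rewrite E eqxx in Hne.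
case: (x =P par F v) => [->//|/eqP Hne'].
have Hp := par_lt Hv'; apply: ltn_trans (IH _ Hp _ _ Hx' Hne') _ => //; lia.
Qed.

Lemma depth_path_up_le v x : v < nv F -> x \in path_up F v -> depth F x <= depth F v.
Proof.
move=> Hv Hx; case: (x =P v) => [->//|/eqP Hne]; exact/ltnW/depth_path_up_lt.
Qed.

Lemma path_up_child v a : v < nv F -> a \in path_up F v -> a != v ->
  exists c, [/\ c \in path_up F v, 0 < c < nv F & par F c = a].
Proof.
elim/ltn_ind: v a => v IH a Hv Ha Hne.
case: (posnP v) => [E|H0]; first by move: Ha Hne; rewrite E => /mem_path_up_root ->.
have Hv' : 0 < v < nv F by rewrite H0.
case: (path_up_parP Hv' Ha) => [E|Ha']; first by rewrite E eqxx in Hne.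
case: (a =P par F v) => [->|/eqP Hne']; first by exists v; split=> //; exact: path_up_self.
have Hp := par_lt Hv'.
have [|c [Hc1 Hc2 Hc3]] := IH _ Hp a _ Ha' Hne'; first lia.
by exists c; split=> //; apply: mem_path_up_par.
Qed.

Lemma path_up_total v x y : v < nv F -> x \in path_up F v -> y \in path_up F v ->
  x \in path_up F y \/ y \in path_up F x.
Proof.
elim/ltn_ind: v x y => v IH x y Hv Hx Hy.
case: (posnP v) => [E|H0].
  by move: Hx Hy; rewrite E => /mem_path_up_root -> /mem_path_up_root ->; left; exact: path_up_self.
have Hv' : 0 < v < nv F by rewrite H0.
case: (path_up_parP Hv' Hx) => [->|Hx']; first by right.
case: (path_up_parP Hv' Hy) => [->|Hy']; first by left.
have Hp := par_lt Hv'; apply: (IH _ Hp) => //; lia.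
Qed.

Hypothesis Hlab : forall v, 0 < v < nv F -> lab F (par F v) < lab F v.

Lemma lab_path_up_lt v x : v < nv F -> x \in path_up F v -> x != v -> lab F x < lab F v.
Proof.
elim/ltn_ind: v x => v IH x Hv Hx Hne.
case: (posnP v) => [E|H0]; first by move: Hx Hne; rewrite E => /mem_path_up_root ->.
have Hv' : 0 < v < nv F by rewrite H0.
have Hl := Hlab Hv'.
case: (path_up_parP Hv' Hx) => [E|Hx']; first by rewrite E eqxx in Hne.
case: (x =P par F v) => [->//|/eqP Hne'].
have Hp := par_lt Hv'; apply: ltn_trans (IH _ Hp _ _ Hx' Hne') _ => //; lia.
Qed.

Lemma lab_path_up_le v x : v < nv F -> x \in path_up F v -> lab F x <= lab F v.
Proof.
move=> Hv Hx; case: (x =P v) => [->//|/eqP Hne]; exact/ltnW/lab_path_up_lt.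
Qed.

End TreePaths.

(** * Reserve, height and reach *)

Definition adv_after (w : seq bool) (l : nat) : nat :=
  count (wbit w) (iota l.+1 (size w - l)).

Lemma adv_after_split w l1 l2 : l1 <= l2 <= size w ->
  adv_after w l1 = count (wbit w) (iota l1.+1 (l2 - l1)) + adv_after w l2.
Proof.
move=> H; rewrite /adv_after.
have -> : size w - l1 = (l2 - l1) + (size w - l2) by lia.
by rewrite iotaD count_cat; congr (_ + count _ (iota _ _)); lia.
Qed.

Lemma adv_after_lt w l1 l2 : l1 < l2 <= size w -> wbit w l2 -> adv_after w l2 < adv_after w l1.
Proof.
move=> H Hb; rewrite (@adv_after_split w l1 l2); last lia.
have : 0 < count (wbit w) (iota l1.+1 (l2 - l1)).
  rewrite -has_count; apply/hasP; exists l2 => //; rewrite mem_iota; lia.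
lia.
Qed.

Lemma adv_after_size w : adv_after w (size w) = 0.
Proof. by rewrite /adv_after subnn. Qed.

Lemma wbit_rcons w b i : 0 < i <= size w -> wbit (rcons w b) i = wbit w i.
Proof. by move=> H; rewrite /wbit nth_rcons; case: ifP => //; lia. Qed.

Lemma wbit_rcons_size w b : wbit (rcons w b) (size w).+1 = b.
Proof. by rewrite /wbit nth_rcons /= ltnn eqxx. Qed.

Lemma adv_after_rcons w b l : l <= size w -> adv_after (rcons w b) l = adv_after w l + b.
Proof.
move=> H; rewrite /adv_after size_rcons.
have -> : (size w).+1 - l = (size w - l) + 1 by lia.
rewrite iotaD count_cat /=.
have -> : l.+1 + (size w - l) = (size w).+1 by lia.
rewrite wbit_rcons_size addn0; congr (_ + _).
apply: eq_in_count => i; rewrite mem_iota => Hi; apply: wbit_rcons; lia.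
Qed.

Lemma honest_idx_rcons w b i : i <= size w -> honest_idx (rcons w b) i = honest_idx w i.
Proof.
move=> H; rewrite /honest_idx size_rcons.
case: (posnP i) => [->//|Hi]; rewrite wbit_rcons; last lia.
by rewrite /= H (leqW H).
Qed.

Lemma honest_idx_rcons_size w b : honest_idx (rcons w b) (size w).+1 = ~~ b.
Proof. by rewrite /honest_idx size_rcons wbit_rcons_size leqnn. Qed.

Lemma depth_le_height F v : v < nv F -> depth F v <= height F.
Proof. by move=> Hv; rewrite /height (leq_bigmax (Ordinal Hv)). Qed.

Lemma height_le F c : (forall v, v < nv F -> depth F v <= c) -> height F <= c.
Proof. by move=> H; apply/bigmax_leqP => i _; apply: H. Qed.

Lemma height_attained F : 0 < nv F -> exists2 v, v < nv F & depth F v = height F.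
Proof.
move=> H; have [i Hi] := bigop.eq_bigmax (fun i : 'I_(nv F) => depth F i)
  ltac:(by rewrite card_ord).
by exists i => //; rewrite /height Hi.
Qed.

Lemma bigminn_le_cond n (P : pred 'I_n) (G : 'I_n -> nat) x0 j :
  P j -> \big[minn/x0]_(i < n | P i) G i <= G j.
Proof. exact: (@bigmin_le_cond _ nat _ x0 j P G). Qed.

Lemma bigminn_le_exists n (P : pred 'I_n) (G : 'I_n -> nat) x0 c :
  c < x0 -> \big[minn/x0]_(i < n | P i) G i <= c -> exists2 j, P j & G j <= c.
Proof.
move=> Hc Hb; case: (boolP [exists j, P j && (G j <= c)]).
  by case/existsP=> j /andP []; exists j.
move/existsPn=> Hn; suff : c < \big[minn/x0]_(i < n | P i) G i by rewrite ltnNge Hb.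
apply/(@bigmin_gtP _ nat _ x0 c P G); split=> // i Pi.
by move: (Hn i); rewrite Pi /= -ltnNge.
Qed.

Local Open Scope ring_scope.

Lemma reachE w F t :
  reach w F t = (adv_after w (lab F t))%:Z - (height F - depth F t)%:Z.
Proof. by []. Qed.

Lemma reach_le_rhoF w F v : (v < nv F)%N -> reach w F v <= rhoF w F.
Proof. by move=> Hv; rewrite /rhoF (le_bigmax_cond _ (j := Ordinal Hv)). Qed.

Lemma rhoF_le w F c : (forall v, (v < nv F)%N -> reach w F v <= c) -> (0 < nv F)%N ->
  rhoF w F <= c.
Proof. by move=> H H0; apply/bigmax_leP; split=> [|i _]; apply: H. Qed.

Lemma rhoF_attained w F : (0 < nv F)%N -> exists2 v, (v < nv F)%N & reach w F v = rhoF w F.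
Proof.
move=> H0; apply: (big_ind (fun y => exists2 v, (v < nv F)%N & reach w F v = y)).
- by exists 0.
- move=> x y [a Ha <-] [b Hb <-].
  by case: (leP (reach w F a) (reach w F b)) => _; [exists b | exists a].
- by move=> i _; exists i.
Qed.

Lemma rhoF_ge0 w F : (0 < nv F)%N -> 0 <= rhoF w F.
Proof.
move=> H0; have [v Hv Hd] := height_attained H0; apply: le_trans (reach_le_rhoF w Hv).
by rewrite reachE Hd subnn subr0.
Qed.

Lemma min_reach_le_muF w k F u v : (u < nv F)%N -> (v < nv F)%N -> disjoint_over F k u v ->
  Order.min (reach w F u) (reach w F v) <= muF w k F.
Proof.
move=> Hu Hv Hd; apply: le_trans (le_bigmax_cond _ (j := Ordinal Hu) _ isT).
by rewrite (le_bigmax_cond _ (j := Ordinal Hv) _ Hd).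
Qed.

Lemma disjoint_over_root F k : disjoint_over F k 0 0.
Proof. by []. Qed.

Lemma muF_le w k F c :
  (forall u v, (u < nv F)%N -> (v < nv F)%N -> disjoint_over F k u v ->
     Order.min (reach w F u) (reach w F v) <= c) ->
  (0 < nv F)%N -> muF w k F <= c.
Proof.
move=> H H0; have Hc : reach w F 0 <= c.
  by have := H 0 0 H0 H0 (disjoint_over_root F k); rewrite minxx.
apply/bigmax_leP; split=> // i _; apply/bigmax_leP; split=> // j Hj; exact: H.
Qed.

Lemma muF_le_rhoF w k F : (0 < nv F)%N -> muF w k F <= rhoF w F.
Proof.
apply: muF_le => u v Hu _ _; rewrite ge_min; apply/orP; left; exact: reach_le_rhoF.
Qed.

Close Scope ring_scope.

(** * Valid forks and their restrictions *)

Lemma valid_fork_rooted w G : valid_fork w G -> rooted G.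
Proof. by case=> H0 _ Hpar _ _; split=> // v Hv; case: (Hpar v Hv). Qed.

Lemma valid_fork_lab_par w G v : valid_fork w G -> 0 < v < nv G -> lab G (par G v) < lab G v.
Proof. by case=> _ _ Hpar _ _ Hv; case: (Hpar v Hv). Qed.

Lemma valid_fork_lab_range w G v : valid_fork w G -> 0 < v < nv G -> 0 < lab G v <= size w.
Proof. by case=> _ _ Hpar _ _ Hv; case: (Hpar v Hv) => _ H1 ->; rewrite andbT; lia. Qed.

Lemma valid_fork_lab_le w G v : valid_fork w G -> v < nv G -> lab G v <= size w.
Proof.
move=> HG Hv; case: (posnP v) => [->|H0]; first by case: HG => _ ->.
by case/andP: (valid_fork_lab_range HG (v := v) ltac:(lia)).
Qed.

(* [reach w G v = potential w G v - height G], so reach compares like potential. *)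
Definition potential (w : seq bool) (G : fork) (v : nat) : nat :=
  adv_after w (lab G v) + depth G v.

Section ValidFork.
Variables (w : seq bool) (G : fork).
Hypothesis HG : valid_fork w G.
Let HGr := valid_fork_rooted HG.
Let Hlab v := @valid_fork_lab_par w G v HG.

Lemma lab_root : lab G 0 = 0. Proof. by case: HG. Qed.

(* Stepping from a vertex to its parent loses one unit of depth and gains at
   least one adversarial index in the reserve when the vertex is adversarial. *)
Lemma potential_ancestor (P : pred nat) v : P 0 -> v < nv G ->
  (forall x, x \in path_up G v -> ~~ P x -> wbit w (lab G x)) ->
  exists a, [/\ a \in path_up G v, P a & potential w G v <= potential w G a].
Proof.
move=> P0; elim/ltn_ind: v => v IH Hv Hadv.
case: (boolP (P v)) => Pv; first by exists v; split=> //; exact: path_up_self.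
have H0 : 0 < v by case: (posnP v) Pv => [->|]; rewrite ?P0.
have Hv' : 0 < v < nv G by rewrite H0.
have Hp := par_lt HGr Hv'.
have [||a [Ha1 Ha2 Ha3]] := IH (par G v) Hp.
- lia.
- by move=> x Hx; apply: Hadv; apply: mem_path_up_par.
exists a; split=> //; first exact: mem_path_up_par.
have Hl := Hlab Hv'; have Hw := valid_fork_lab_range HG Hv'.
have := @adv_after_lt w (lab G (par G v)) (lab G v) ltac:(lia) (Hadv v (path_up_self _ _) Pv).
move: Ha3; rewrite /potential (depth_par HGr Hv'); lia.
Qed.

Lemma reach_le_potential v a : (v < nv G)%N -> (a < nv G)%N ->
  potential w G v <= potential w G a -> (reach w G v <= reach w G a)%R.
Proof.
rewrite /potential => Hv Ha H; rewrite !reachE.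
have := depth_le_height Hv; have := depth_le_height Ha; lia.
Qed.

Lemma honest_ancestor v : v < nv G -> exists h,
  [/\ h \in path_up G v, honest_vertex w G h & (reach w G v <= reach w G h)%R].
Proof.
move=> Hv; have [||a [Ha1 Ha2 Ha3]] := @potential_ancestor (honest_vertex w G) v _ Hv.
- by rewrite /honest_vertex eqxx.
- move=> x Hx; rewrite /honest_vertex negb_or => /andP [Hx0 Hh].
  have Hxn := path_up_lt HGr Hv Hx.
  move: Hh; rewrite /honest_idx (valid_fork_lab_range HG (v := x)) ?negbK //; lia.
exists a; split=> //; apply: reach_le_potential => //; exact: path_up_lt Ha1.
Qed.

Lemma lca_par u v : 0 < u < nv G ->
  lca G u v = if u \in path_up G v then u else lca G (par G u) v.
Proof. by move=> Hu; rewrite /lca (path_up_par HGr Hu) /= /anc; case: ifP. Qed.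

Lemma lca_path_up u v : u < nv G -> v < nv G ->
  lca G u v \in path_up G u /\ lca G u v \in path_up G v.
Proof.
elim/ltn_ind: u => u IH Hu Hv.
case: (posnP u) => [->|H0].
  have -> : lca G 0 v = 0 by rewrite /lca path_up_root /=; case: ifP.
  split; [exact: path_up_self | exact: root_in_path_up].
have Hu' : 0 < u < nv G by rewrite H0.
rewrite lca_par //; case: ifP => Huv; first by split=> //; exact: path_up_self.
have Hp := par_lt HGr Hu'.
have [||H1 H2] := IH _ Hp; [lia | done |].
by split=> //; apply: mem_path_up_par.
Qed.

Lemma lab_le_lca u v x : u < nv G -> x \in path_up G u -> x \in path_up G v ->
  lab G x <= lab G (lca G u v).
Proof.
elim/ltn_ind: u x => u IH x Hu Hxu Hxv.
case: (posnP u) => [E|H0].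
  by move: Hxu; rewrite E => /mem_path_up_root ->; rewrite lab_root.
have Hu' : 0 < u < nv G by rewrite H0.
rewrite lca_par //; case: ifP => Huv; first exact: (lab_path_up_le HGr Hlab Hu Hxu).
have Hp := par_lt HGr Hu'.
case: (path_up_parP HGr Hu' Hxu) => [E|Hx']; first by rewrite -E Hxv in Huv.
apply: IH => //; lia.
Qed.

Lemma disjoint_overP k u v :
  reflect (forall x, x \in path_up G u -> x \in path_up G v -> lab G x <= k)
          (disjoint_over G k u v).
Proof.
apply: (iffP allP) => H.
  move=> x Hu Hv; have := H x; rewrite mem_filter /anc Hu Hv => /(_ isT).
  by case/orP => [/eqP ->|//]; rewrite lab_root.
by move=> x; rewrite mem_filter /anc => /andP [Hv Hu]; rewrite H ?orbT.
Qed.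

Lemma disjoint_over_sym k u v : disjoint_over G k u v -> disjoint_over G k v u.
Proof. by move/disjoint_overP=> Hd; apply/disjoint_overP => x H1 H2; exact: Hd. Qed.

Lemma disjoint_over_switch k t1 t2 s x : t1 < nv G -> t2 < nv G -> s < nv G ->
  disjoint_over G k t1 t2 -> x \in path_up G t2 -> x \in path_up G s -> k < lab G x ->
  disjoint_over G k t1 s.
Proof.
move=> H1 H2 Hs /disjoint_overP Hd Hx2 Hxs Hkx; apply/disjoint_overP => y Hy1 Hys.
case: (path_up_total HGr Hs Hys Hxs) => Hyx.
  exact: Hd Hy1 (path_up_trans HGr H2 Hx2 Hyx).
by have := Hd x (path_up_trans HGr H1 Hy1 Hyx) Hx2; lia.
Qed.

End ValidFork.

Section Restrict.
Variable G : fork.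
Hypothesis HGr : rooted G.
Variable K : pred nat.
Hypothesis K0 : K 0.
Hypothesis K_par : forall v, 0 < v < nv G -> K v -> K (par G v).

Definition kept := [seq v <- iota 0 (nv G) | K v].
Definition kept_nth i := nth 0 kept i.
Definition restrict :=
  Fork (size kept) (fun i => index (par G (kept_nth i)) kept) (fun i => lab G (kept_nth i)).

Lemma mem_kept v : (v \in kept) = (v < nv G) && K v.
Proof. by rewrite mem_filter mem_iota add0n andbC. Qed.

Lemma kept_uniq : uniq kept.
Proof. exact: filter_uniq (iota_uniq _ _). Qed.

Lemma size_kept_gt0 : 0 < size kept.
Proof. by rewrite /kept; case: (nv G) HGr.1 => [//|n] _ /=; rewrite K0. Qed.

Lemma kept_nth0 : kept_nth 0 = 0.
Proof. by rewrite /kept_nth /kept; case: (nv G) HGr.1 => [//|n] _ /=; rewrite K0. Qed.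

Lemma kept_nth_mem i : i < size kept -> kept_nth i \in kept.
Proof. exact: mem_nth. Qed.

Lemma kept_nth_lt i : i < size kept -> kept_nth i < nv G.
Proof. by move/kept_nth_mem; rewrite mem_kept => /andP []. Qed.

Lemma kept_nth_K i : i < size kept -> K (kept_nth i).
Proof. by move/kept_nth_mem; rewrite mem_kept => /andP []. Qed.

Lemma index_kept_nth i : i < size kept -> index (kept_nth i) kept = i.
Proof. by move=> Hi; exact: index_uniq Hi kept_uniq. Qed.

Lemma kept_nth_index v : v \in kept -> kept_nth (index v kept) = v.
Proof. exact: nth_index. Qed.

Lemma kept_nth_mono i j : i < j -> j < size kept -> kept_nth i < kept_nth j.
Proof.
move=> Hij Hj; have Hs : sorted ltn kept.
  by apply: sorted_filter; [exact: ltn_trans | exact: iota_ltn_sorted].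
by apply: (sorted_ltn_nth ltn_trans) => //; rewrite inE; lia.
Qed.

Lemma kept_nth_inj i j : i < size kept -> j < size kept -> kept_nth i = kept_nth j -> i = j.
Proof. by move=> Hi Hj E; rewrite -(index_kept_nth Hi) -(index_kept_nth Hj) E. Qed.

Lemma kept_nth_vertex i : 0 < i < size kept -> 0 < kept_nth i < nv G.
Proof.
case/andP=> H0 Hi; rewrite kept_nth_lt // andbT.
by have := kept_nth_mono H0 Hi; rewrite kept_nth0.
Qed.

Lemma par_kept_nth_mem i : 0 < i < size kept -> par G (kept_nth i) \in kept.
Proof.
move=> Hi; have Hn := kept_nth_vertex Hi.
rewrite mem_kept K_par ?kept_nth_K ?andbT //; last lia.
by have := par_lt HGr Hn; lia.
Qed.

Lemma kept_nth_par i : 0 < i < size kept -> kept_nth (par restrict i) = par G (kept_nth i).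
Proof. by move=> Hi; rewrite /= kept_nth_index // par_kept_nth_mem. Qed.

Lemma restrict_par_lt i : 0 < i < size kept -> par restrict i < size kept.
Proof. by move=> Hi; rewrite /= index_mem par_kept_nth_mem. Qed.

Lemma restrict_rooted : rooted restrict.
Proof.
split=> [|i Hi]; first exact: size_kept_gt0.
have Hs := restrict_par_lt Hi; have E := kept_nth_par Hi.
have Hp := par_lt HGr (kept_nth_vertex Hi); rewrite -E in Hp.
case: (ltngtP (par restrict i) i) => // H.
- by have := kept_nth_mono H Hs; lia.
- by rewrite H in Hp; lia.
Qed.

Lemma restrict_depth i : i < size kept -> depth restrict i = depth G (kept_nth i).
Proof.
elim/ltn_ind: i => i IH Hi.
case: (posnP i) => [->|H0]; first by rewrite kept_nth0.
have Hi' : 0 < i < size kept by rewrite H0.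
rewrite (depth_par restrict_rooted Hi') (depth_par HGr (kept_nth_vertex Hi')) -kept_nth_par //.
by rewrite IH ?restrict_par_lt // (par_lt restrict_rooted Hi').
Qed.

Lemma restrict_path_up i : i < size kept ->
  map kept_nth (path_up restrict i) = path_up G (kept_nth i).
Proof.
elim/ltn_ind: i => i IH Hi.
case: (posnP i) => [->|H0]; first by rewrite kept_nth0 !path_up_root /= kept_nth0.
have Hi' : 0 < i < size kept by rewrite H0.
rewrite (path_up_par restrict_rooted Hi') (path_up_par HGr (kept_nth_vertex Hi')).
by rewrite -kept_nth_par // -IH ?restrict_par_lt // (par_lt restrict_rooted Hi').
Qed.

Lemma restrict_path_up_mem i x : i < size kept -> x \in path_up restrict i ->
  kept_nth x \in path_up G (kept_nth i).
Proof. by move=> Hi Hx; rewrite -restrict_path_up // map_f. Qed.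

End Restrict.

Lemma count_iota1_uniq (P : pred nat) N x y : count P (iota 0 N) = 1 ->
  x < N -> y < N -> P x -> P y -> x = y.
Proof.
move=> Hc Hx Hy Px Py; apply/eqP; apply: contraT => Hne.
have : size [:: x; y] <= size [seq z <- iota 0 N | P z].
  apply: uniq_leq_size; first by rewrite /= inE Hne.
  move=> z; rewrite !inE mem_filter mem_iota => /orP [/eqP ->|/eqP ->]; rewrite ?Px ?Py /=; lia.
by rewrite size_filter Hc.
Qed.

Lemma count_iota1_exists (P : pred nat) N : count P (iota 0 N) = 1 -> exists2 x, x < N & P x.
Proof.
move=> Hc; have : has P (iota 0 N) by rewrite has_count Hc.
by case/hasP => x; rewrite mem_iota => Hx Px; exists x.
Qed.

(** * Deleting the last honest vertex *)

Lemma top_vertex_exists w G : valid_fork (rcons w false) G ->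
  exists2 u, u < nv G & lab G u = (size w).+1.
Proof.
case=> _ _ _ H3 _; have := H3 (size w).+1; rewrite honest_idx_rcons_size.
by case/(_ isT)/count_iota1_exists => u Hu /eqP; exists u.
Qed.

Local Open Scope ring_scope.

(* How the relative margin evolves on an honest symbol: it drops by one,
   except that a zero margin below a positive reach stays zero. *)
Definition mu_next (rho mu : int) : int :=
  if (mu == 0) && (mu < rho) then 0 else mu - 1.

Lemma mu_next_ge rho mu : mu - 1 <= mu_next rho mu.
Proof. by rewrite /mu_next; case: ifP => // /andP [/eqP -> _]. Qed.

Lemma min_le_mu_next rho mu ra rb rt ru : ra <= rho -> Order.min ra rb <= mu -> 0 <= rb ->
  rt <= ra - 1 -> ru <= 0 -> Order.min rt ru <= mu_next rho mu.
Proof.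
move=> Hra Hmu Hrb Hrt Hru; rewrite /mu_next ge_min.
case: ifP => [_|/negbT]; first by rewrite Hru orbT.
rewrite negb_and -leNgt => Hcase; move: Hmu; rewrite ge_min => /orP Hmu.
case: (lerP 1 mu) => Hm1; first by apply/orP; right; lia.
by apply/orP; left; case/orP: Hcase => H; case: Hmu; lia.
Qed.

Close Scope ring_scope.

Section DeleteTop.
Variables (w : seq bool) (G : fork).
Let n := size w.
Let w0 := rcons w false.
Hypothesis HG : valid_fork w0 G.
Let HGr := valid_fork_rooted HG.
Let Hlab v := @valid_fork_lab_par w0 G v HG.
Variable u : nat.
Hypothesis Hu : u < nv G.
Hypothesis Hlu : lab G u = n.+1.

Lemma top_vertex_uniq x : x < nv G -> lab G x = n.+1 -> x = u.
Proof.
case: HG => _ _ _ H3 _ Hx Hlx.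
have := H3 n.+1; rewrite honest_idx_rcons_size => /(_ isT) Hc.
by apply: (count_iota1_uniq Hc) => //; rewrite ?Hlx ?Hlu.
Qed.

Lemma top_vertex_gt0 : 0 < u.
Proof. by case: (posnP u) Hlu => [->|//]; rewrite (lab_root HG). Qed.

Lemma top_vertex_not_ancestor t x : t < nv G -> x \in path_up G t -> x != t -> x != u.
Proof.
move=> Ht Hx Hne; apply/eqP => E.
have := lab_path_up_lt HGr Hlab Ht Hx Hne; rewrite E Hlu.
have := valid_fork_lab_le HG Ht; rewrite size_rcons; lia.
Qed.

Definition under_honest v :=
  has (fun x => (v \in path_up G x) && honest_vertex w G x) (iota 0 (nv G)).

Lemma under_honestP v : reflect
  (exists x, [/\ x < nv G, v \in path_up G x & honest_vertex w G x]) (under_honest v).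
Proof.
apply: (iffP hasP) => [[x]|[x [H1 H2 H3]]].
  by rewrite mem_iota => /andP [_ H1] /andP [H2 H3]; exists x.
by exists x; rewrite ?mem_iota ?H2 ?H3.
Qed.

Lemma under_honest0 : under_honest 0.
Proof.
apply/under_honestP; exists 0; split; [exact: HGr.1 | exact: path_up_self |].
by rewrite /honest_vertex eqxx.
Qed.

Lemma under_honest_par v : 0 < v < nv G -> under_honest v -> under_honest (par G v).
Proof.
move=> Hv /under_honestP [x [H1 H2 H3]]; apply/under_honestP; exists x; split=> //.
by apply: (path_up_trans HGr H1 H2); apply: mem_path_up_par => //; exact: path_up_self.
Qed.

Lemma under_honest_lab v : v < nv G -> under_honest v -> lab G v <= n.
Proof.
move=> Hv /under_honestP [x [H1 H2 /orP [/eqP E|/andP [/andP [_ Hx] _]]]].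
  by move: H2; rewrite E => /mem_path_up_root ->; rewrite (lab_root HG).
exact: leq_trans (lab_path_up_le HGr Hlab H1 H2) Hx.
Qed.

Lemma under_honest_depth v : v < nv G -> under_honest v -> depth G v < depth G u.
Proof.
move=> Hv /under_honestP [x [H1 H2 /orP [/eqP E|H3]]].
  by move: H2; rewrite E => /mem_path_up_root ->; rewrite depth_root (depth_par HGr) // top_vertex_gt0.
apply: leq_ltn_trans (depth_path_up_le HGr H1 H2) _.
have Hxn : lab G x <= n by case/andP: H3 => /andP [].
case: HG => _ _ _ _ H4; apply: H4 => //.
- by rewrite honest_idx_rcons.
- by rewrite Hlu honest_idx_rcons_size.
- by rewrite Hlu.
Qed.

Lemma not_under_honest_adv v : v < nv G -> ~~ under_honest v -> v != u ->
  v != 0 /\ wbit w0 (lab G v).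
Proof.
move=> Hv HK Hne.
have Hv0 : v != 0 by apply: contraNneq HK => ->; exact: under_honest0.
split=> //.
have Hl : 0 < lab G v <= n.+1.
  by rewrite -[n.+1](size_rcons w false); apply: (valid_fork_lab_range HG); lia.
have Hle : lab G v <= n.
  case: (ltngtP (lab G v) n.+1) => [||E]; [lia | lia |].
  by rewrite (top_vertex_uniq Hv E) eqxx in Hne.
apply: contraNT HK => Hb; apply/under_honestP; exists v; split=> //; first exact: path_up_self.
apply/orP; right; rewrite /honest_idx Hle andbT.
by move: Hb; rewrite wbit_rcons; [case/andP: Hl => -> _ | lia].
Qed.

Local Notation trim := (restrict G under_honest).
Local Notation keep := (kept_nth G under_honest).
Local Notation kept_honest := (kept G under_honest).
Let Htrim := restrict_rooted HGr under_honest0 under_honest_par.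
Let keep0 : keep 0 = 0 := kept_nth0 HGr under_honest0.
Let keep_par := kept_nth_par HGr under_honest0 under_honest_par.

Lemma trim_depth i : i < size kept_honest -> depth trim i = depth G (keep i).
Proof. by move=> Hi; exact: (restrict_depth HGr under_honest0 under_honest_par Hi). Qed.

Lemma trim_valid : valid_fork w trim.
Proof.
split.
- exact: Htrim.1.
- by rewrite /= keep0 (lab_root HG).
- move=> i Hi; have Hk := kept_nth_vertex HGr under_honest0 Hi.
  split; first exact: Htrim.2.
    by rewrite /= -/(keep _) keep_par //; exact: Hlab.
  have Hi' : (i < size kept_honest)%N by case/andP: Hi.
  exact: under_honest_lab (kept_nth_lt Hi') (kept_nth_K Hi').
- move=> i Hi.
  have -> : count (fun v => lab trim v == i) (iota 0 (size kept_honest)) =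
            count (fun v => lab G v == i) kept_honest.
    by rewrite -[in RHS](mkseq_nth 0 kept_honest) /mkseq count_map.
  case: HG => _ _ _ H3 _; rewrite /kept count_filter.
  have Hin : i <= n by case/andP: Hi => /andP [].
  rewrite -(H3 i); last by rewrite honest_idx_rcons.
  apply: eq_in_count => v; rewrite mem_iota add0n => /andP [_ Hv] /=.
  case: (lab G v =P i) => //= E; apply/under_honestP; exists v; split=> //.
    exact: path_up_self.
  by rewrite /honest_vertex E Hi orbT.
- move=> a b Ha Hb Hha Hhb Hab.
  rewrite !trim_depth //; case: HG => _ _ _ _ H4; apply: H4; try exact: kept_nth_lt.
  + by rewrite honest_idx_rcons //; case/andP: Hha => /andP [].
  + by rewrite honest_idx_rcons //; case/andP: Hhb => /andP [].
  + exact: Hab.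
Qed.

Lemma trim_closed : closed w trim.
Proof.
move=> i Hi Hleaf.
have [x [H1 H2 H3]] := under_honestP _ (kept_nth_K Hi).
case: (keep i =P x) => [E|/eqP Hne].
  case/orP: H3 => [/eqP Ex|Hh]; last by rewrite /honest_vertex /= -/(keep i) E Hh orbT.
  apply/orP; left; apply/eqP; apply: (@kept_nth_inj G under_honest) => //.
    exact: (size_kept_gt0 HGr under_honest0).
  by rewrite keep0 E Ex.
have [c [Hc1 Hc2 Hc3]] := path_up_child HGr H1 H2 Hne.
have Hcin : c \in kept_honest.
  by rewrite mem_kept; case/andP: Hc2 => _ ->; apply/under_honestP; exists x.
exfalso; apply: (Hleaf (index c kept_honest)).
  rewrite /= index_mem Hcin andbT lt0n; apply/eqP => E0.
  by move: Hc2; rewrite -(kept_nth_index Hcin) E0 keep0.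
by rewrite /= -/(keep (index c _)) kept_nth_index // Hc3 index_kept_nth.
Qed.

Lemma trim_height_lt : height trim < depth G u.
Proof.
have : height trim <= (depth G u).-1.
  apply: height_le => i Hi; rewrite trim_depth //.
  have := under_honest_depth (kept_nth_lt Hi) (kept_nth_K Hi); lia.
have := under_honest_depth HGr.1 under_honest0; lia.
Qed.

Lemma trim_potential a : a \in kept_honest ->
  potential w trim (index a kept_honest) = potential w G a.
Proof.
move=> Ha; have Hi : index a kept_honest < size kept_honest by rewrite index_mem.
by rewrite /potential trim_depth // /= -/(keep _) kept_nth_index.
Qed.

Local Open Scope ring_scope.

Lemma reach_top_le0 : reach w0 G u <= 0.
Proof. by rewrite reachE Hlu -(size_rcons w false) adv_after_size; lia. Qed.

(* Above [t] the vertices outside [trim] are adversarial, so [t] can be pushed up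
   to a vertex of [trim] without losing potential; the extra honest symbol adds
   a level to the height, hence the loss of one unit of reach. *)
Lemma reach_project t : (t < nv G)%N -> t != u -> exists a,
  [/\ (a < size kept_honest)%N, keep a \in path_up G t & reach w0 G t <= reach w trim a - 1].
Proof.
move=> Ht Htu.
have [|a [Ha1 Ha2 Ha3]] := @potential_ancestor w0 G HG under_honest t under_honest0 Ht.
  move=> x Hx HK; case: (x =P t) => [E|/eqP Hne].
    by rewrite E in HK *; case: (not_under_honest_adv Ht HK Htu).
  have Hxn := path_up_lt HGr Ht Hx.
  by case: (not_under_honest_adv Hxn HK (top_vertex_not_ancestor Ht Hx Hne)).
have Han := path_up_lt HGr Ht Ha1.
have Hain : a \in kept_honest by rewrite mem_kept Han.
have Hi : (index a kept_honest < size kept_honest)%N by rewrite index_mem.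
exists (index a kept_honest); rewrite kept_nth_index //; split=> //.
apply: le_trans (reach_le_potential Ht Han Ha3) _.
have := trim_potential Hain; rewrite !reachE /potential /= -/(keep _) kept_nth_index //.
rewrite adv_after_rcons ?under_honest_lab //.
have := trim_height_lt; have := depth_le_height Hu; have := depth_le_height Han.
have := @depth_le_height trim _ Hi; rewrite trim_depth // kept_nth_index //; lia.
Qed.

Lemma reach_project_top : exists b,
  [/\ (b < size kept_honest)%N, keep b \in path_up G u & 0 <= reach w trim b].
Proof.
have Hu' : (0 < u < nv G)%N by rewrite top_vertex_gt0 Hu.
have Hp := par_lt HGr Hu'; have Hpn : (par G u < nv G)%N by lia.
have Hlp : (lab G (par G u) <= n)%N by have := Hlab Hu'; rewrite Hlu; lia.
have [|a [Ha1 Ha2 Ha3]] :=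
  @potential_ancestor w0 G HG under_honest (par G u) under_honest0 Hpn.
  move=> x Hx HK; have Hxn := path_up_lt HGr Hpn Hx.
  suff Hne : x != u by case: (not_under_honest_adv Hxn HK Hne).
  apply/eqP => E; have := lab_path_up_le HGr Hlab Hpn Hx; rewrite E Hlu; lia.
have Han := path_up_lt HGr Hpn Ha1.
have Hain : a \in kept_honest by rewrite mem_kept Han.
have Hi : (index a kept_honest < size kept_honest)%N by rewrite index_mem.
exists (index a kept_honest); rewrite kept_nth_index //; split=> //.
  exact: mem_path_up_par.
rewrite reachE; have := trim_potential Hain; rewrite /potential /= -/(keep _) kept_nth_index //.
move: Ha3; rewrite /potential (adv_after_rcons _ Hlp) (adv_after_rcons _ (under_honest_lab Han Ha2)).
have := trim_height_lt; rewrite (depth_par HGr Hu').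
have := @depth_le_height trim _ Hi; rewrite trim_depth // kept_nth_index //; lia.
Qed.

Lemma disjoint_over_project k t1 t2 a1 a2 : (t1 < nv G)%N -> (t2 < nv G)%N ->
  disjoint_over G k t1 t2 -> (a1 < size kept_honest)%N -> (a2 < size kept_honest)%N ->
  keep a1 \in path_up G t1 -> keep a2 \in path_up G t2 -> disjoint_over trim k a1 a2.
Proof.
move=> Ht1 Ht2 /(disjoint_overP HG) Hd Ha1 Ha2 Hp1 Hp2.
apply/(disjoint_overP trim_valid) => x Hx1 Hx2; apply: Hd.
- exact: (path_up_trans HGr Ht1 Hp1 (restrict_path_up_mem HGr under_honest0 under_honest_par Ha1 Hx1)).
- exact: (path_up_trans HGr Ht2 Hp2 (restrict_path_up_mem HGr under_honest0 under_honest_par Ha2 Hx2)).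
Qed.

Lemma not_disjoint_over_top k : (k < n.+1)%N -> ~~ disjoint_over G k u u.
Proof.
move=> Hk; apply/negP => /(disjoint_overP HG) /(_ u (path_up_self _ _) (path_up_self _ _)).
rewrite Hlu; lia.
Qed.

Variable rho : int.
Hypothesis HR : forall H, valid_fork w H -> closed w H -> rhoF w H <= rho.

Lemma reach_not_top_le t : (t < nv G)%N -> t != u -> reach w0 G t <= rho - 1.
Proof.
move=> Ht Htu; have [a [Ha1 _ Ha3]] := reach_project Ht Htu.
apply: le_trans Ha3 _; rewrite lerD2r.
by apply: le_trans (HR trim_valid trim_closed); exact: reach_le_rhoF.
Qed.

Lemma rhoF_delete_top : rhoF w0 G <= Order.max (rho - 1) 0.
Proof.
apply: rhoF_le HGr.1 => v Hv; rewrite le_max.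
case: (v =P u) => [->|/eqP Hne]; first by rewrite reach_top_le0 orbT.
by rewrite reach_not_top_le.
Qed.

Lemma muF_delete_top_size : muF w0 n G <= rho - 1.
Proof.
apply: muF_le HGr.1 => t1 t2 H1 H2 Hd; rewrite ge_min.
case: (t1 =P u) => [E1|/eqP N1]; last by rewrite reach_not_top_le.
case: (t2 =P u) => [E2|/eqP N2]; last by apply/orP; right; apply: reach_not_top_le.
by move: (not_disjoint_over_top (ltnSn n)); rewrite -{1}E1 -E2 Hd.
Qed.

Variables (k : nat) (mu : int).
Hypothesis Hk : (k < n)%N.
Hypothesis HM : forall H, valid_fork w H -> closed w H -> muF w k H <= mu.

Lemma min_reach_projections t1 t2 a1 a2 : (t1 < nv G)%N -> (t2 < nv G)%N ->
  disjoint_over G k t1 t2 -> (a1 < size kept_honest)%N -> (a2 < size kept_honest)%N ->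
  keep a1 \in path_up G t1 -> keep a2 \in path_up G t2 ->
  Order.min (reach w trim a1) (reach w trim a2) <= mu.
Proof.
move=> H1 H2 Hd Ha1 Ha2 Hp1 Hp2; apply: le_trans (HM trim_valid trim_closed).
exact: min_reach_le_muF (disjoint_over_project H1 H2 Hd Ha1 Ha2 Hp1 Hp2).
Qed.

Lemma min_reach_top_le t : (t < nv G)%N -> t != u -> disjoint_over G k t u ->
  Order.min (reach w0 G t) (reach w0 G u) <= mu_next rho mu.
Proof.
move=> Ht Htu Hd.
have [a [Ha1 Ha2 Ha3]] := reach_project Ht Htu.
have [b [Hb1 Hb2 Hb3]] := reach_project_top.
apply: min_le_mu_next Hb3 Ha3 reach_top_le0.
- by apply: le_trans (HR trim_valid trim_closed); exact: reach_le_rhoF.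
- exact: min_reach_projections Ht Hu Hd Ha1 Hb1 Ha2 Hb2.
Qed.

Lemma muF_delete_top : muF w0 k G <= mu_next rho mu.
Proof.
have Hk1 : (k < n.+1)%N by lia.
apply: muF_le HGr.1 => t1 t2 H1 H2 Hd.
case: (t1 =P u) => [E1|/eqP N1]; case: (t2 =P u) => [E2|/eqP N2].
- by move: (not_disjoint_over_top Hk1); rewrite -{1}E1 -E2 Hd.
- rewrite E1 minC; apply: min_reach_top_le => //.
  by rewrite -E1; apply: (disjoint_over_sym HG).
- by rewrite E2; apply: min_reach_top_le => //; rewrite -E2.
have [a1 [Ha1 Hp1 Hr1]] := reach_project H1 N1.
have [a2 [Ha2 Hp2 Hr2]] := reach_project H2 N2.
have := min_reach_projections H1 H2 Hd Ha1 Ha2 Hp1 Hp2.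
have := mu_next_ge rho mu; rewrite !ge_min => HU /orP [Hm|Hm]; apply/orP; [left|right]; lia.
Qed.

End DeleteTop.

Local Open Scope ring_scope.

Lemma rhoF_rcons0_le w rho G :
  (forall H, valid_fork w H -> closed w H -> rhoF w H <= rho) ->
  valid_fork (rcons w false) G -> rhoF (rcons w false) G <= Order.max (rho - 1) 0.
Proof. by move=> HR HG; have [u Hu Hlu] := top_vertex_exists HG; exact: (rhoF_delete_top HG Hu Hlu HR). Qed.

Lemma muF_rcons0_size_le w rho G :
  (forall H, valid_fork w H -> closed w H -> rhoF w H <= rho) ->
  valid_fork (rcons w false) G -> muF (rcons w false) (size w) G <= rho - 1.
Proof.
by move=> HR HG; have [u Hu Hlu] := top_vertex_exists HG; exact: (muF_delete_top_size HG Hu Hlu HR).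
Qed.

Lemma muF_rcons0_le w k rho mu G : (k < size w)%N ->
  (forall H, valid_fork w H -> closed w H -> rhoF w H <= rho) ->
  (forall H, valid_fork w H -> closed w H -> muF w k H <= mu) ->
  valid_fork (rcons w false) G -> muF (rcons w false) k G <= mu_next rho mu.
Proof.
by move=> Hk HR HM HG; have [u Hu Hlu] := top_vertex_exists HG; exact: (muF_delete_top HG Hu Hlu HR Hk HM).
Qed.

(** * Canonical forks *)

Definition witness_pair (w : seq bool) (k : nat) (F : fork) (c : int) : Prop :=
  exists t1 t2, [/\ (t1 < nv F)%N, (t2 < nv F)%N,
    honest_vertex w F t1 && honest_vertex w F t2, disjoint_over F k t1 t2
  & reach w F t1 = rhoF w F /\ reach w F t2 = c].

Definition mu_witnessed (w : seq bool) (k : nat) (F : fork) : Prop :=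
  witness_pair w k F (muF w k F) /\
  forall G, valid_fork w G -> closed w G -> muF w k G <= muF w k F.

(* The conditions that [canonical] imposes at the last level, i.e. on the fork itself;
   the lower levels only concern the chain of subforks. *)
Definition optimal_fork (w : seq bool) (F : fork) : Prop :=
  [/\ valid_fork w F, closed w F,
      exists2 t, (t < nv F)%N & honest_vertex w F t && (reach w F t == rhoF w F),
      forall G, valid_fork w G -> closed w G -> rhoF w G <= rhoF w F
    & forall k, (k < size w)%N -> mu_witnessed w k F].

Lemma mu_witnessed_of_bound w k F c : valid_fork w F -> closed w F ->
  witness_pair w k F c -> (forall G, valid_fork w G -> closed w G -> muF w k G <= c) ->
  mu_witnessed w k F.
Proof.
move=> HF HFc [t1 [t2 [H1 H2 Hh Hd [Hr1 Hr2]]]] Hub.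
suff Hmu : muF w k F = c.
  by split=> [|G]; [exists t1, t2; rewrite Hmu | rewrite Hmu; exact: Hub].
apply/eqP; rewrite eq_le Hub //=.
have := min_reach_le_muF w H1 H2 Hd; rewrite Hr1 Hr2; apply: le_trans.
by rewrite le_min lexx andbT -Hr2 reach_le_rhoF.
Qed.

Close Scope ring_scope.

Lemma canon_take_eq n w w' F : take n w = take n w' -> canon w n F -> canon w' n F.
Proof.
elim: n w w' F => [//|m IH] w w' F E /=.
rewrite -E; case=> H1 [G [HG1 HG2]] H3 H4 H5; split=> //.
exists G; split=> //; apply: (IH w) => //.
by rewrite -(take_takel _ (leqnSn m)) E take_takel.
Qed.

Lemma valid_fork_nil_nv G : valid_fork [::] G -> nv G = 1.
Proof.
move=> HG; case: (ltngtP (nv G) 1) => // H; first by case: HG => H0 _ _ _ _; lia.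
by have /= := @valid_fork_lab_range [::] G 1 HG; lia.
Qed.

Lemma height_nil G : valid_fork [::] G -> height G = 0.
Proof.
move=> HG; apply/eqP; rewrite -leqn0; apply: height_le => v.
by rewrite (valid_fork_nil_nv HG); case: v.
Qed.

Lemma reach_nil_root G : valid_fork [::] G -> reach [::] G 0 = 0%R.
Proof. by move=> HG; rewrite reachE (height_nil HG) (lab_root HG). Qed.

Lemma rhoF_nil G : valid_fork [::] G -> rhoF [::] G = 0%R.
Proof.
move=> HG; rewrite /rhoF (valid_fork_nil_nv HG) big_ord_recl big_ord0 /=.
by rewrite maxxx reach_nil_root.
Qed.

Lemma canonical_optimal w F : canonical w F -> optimal_fork w F.
Proof.
rewrite /canonical; case Es : (size w) => [|m].
  move: Es => /size0nil -> /= HF; have E := valid_fork_nil_nv HF.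
  split=> //.
  - by move=> v; rewrite E; case: v => // _ _; rewrite /honest_vertex eqxx.
  - by exists 0; rewrite ?E // /honest_vertex eqxx (rhoF_nil HF) reach_nil_root.
  - by move=> G HG _; rewrite (rhoF_nil HG) (rhoF_nil HF).
rewrite /= -Es take_size; case=> [[HV HC] _ [t [Ht Hth Htr]] [_ HR] HM].
split=> //; first by exists t => //; rewrite Hth Htr eqxx.
move=> k Hk; have [t1 [t2 [H1 [H2 [Hh1 [Hh2 [Hd [Hr1 [Hr2 [_ HMk]]]]]]]]]] := HM k Hk.
by split=> //; exists t1, t2; rewrite Hh1 Hh2.
Qed.

Lemma canonical_rcons w b F F' : canonical w F -> subfork F F' ->
  optimal_fork (rcons w b) F' -> canonical (rcons w b) F'.
Proof.
move=> HC Hsub [HV' HC' [t Ht /andP [Hth /eqP Htr]] HR HM].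
rewrite /canonical size_rcons /= -[(size w).+1](size_rcons w b) take_size.
split=> //.
- exists F; split=> //; apply: (canon_take_eq (w := w)) HC.
  by rewrite -cats1 take_size_cat // take_size.
- by exists t.
- by split; first exists F'.
move=> k Hk.
have [[t1 [t2 [H1 H2 /andP [Hh1 Hh2] Hd [Hr1 Hr2]]]] Hmax] := HM k Hk.
exists t1, t2; do !split=> //; by exists F'.
Qed.

(** * An adversarial symbol *)

Lemma honest_vertex_rcons w b H v : lab H v <= size w ->
  honest_vertex (rcons w b) H v = honest_vertex w H v.
Proof. by move=> Hl; rewrite /honest_vertex honest_idx_rcons. Qed.

Lemma reach_rcons w b H v : lab H v <= size w ->
  reach (rcons w b) H v = (reach w H v + (b : nat)%:Z)%R.
Proof. by move=> Hl; rewrite !reachE adv_after_rcons // PoszD addrAC. Qed.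

Lemma valid_fork_rcons1 w H : valid_fork w H -> valid_fork (rcons w true) H.
Proof.
move=> HH; have Hle v := @valid_fork_lab_le w H v HH.
case: HH => H0 H1 H2 H3 H4; split=> //.
- move=> v Hv; case: (H2 v Hv) => A B C; split=> //; rewrite size_rcons; lia.
- move=> i; case: (leqP i (size w)) => Hi; first by rewrite honest_idx_rcons // => /H3.
  rewrite /honest_idx size_rcons => /andP [/andP [_ Hi2]].
  have -> : i = (size w).+1 by lia.
  by rewrite wbit_rcons_size.
- by move=> a b Ha Hb; rewrite !honest_idx_rcons ?Hle //; exact: H4.
Qed.

Lemma closed_rcons w b H : valid_fork w H -> closed w H -> closed (rcons w b) H.
Proof.
by move=> HH Hc v Hv Hleaf; rewrite honest_vertex_rcons ?(valid_fork_lab_le HH Hv) ?Hc.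
Qed.

(* A vertex labelled by the final adversarial index would be a dishonest leaf. *)
Lemma valid_closed_rcons1 w H : valid_fork (rcons w true) H -> closed (rcons w true) H ->
  valid_fork w H /\ closed w H.
Proof.
move=> HH Hc.
have Hle : forall v, v < nv H -> lab H v <= size w.
  move=> v Hv; have := valid_fork_lab_le HH Hv; rewrite size_rcons leq_eqVlt ltnS.
  case/orP => [/eqP E|//]; exfalso.
  have Hv0 : v != 0 by apply/eqP => E0; move: E; rewrite E0 (lab_root HH).
  suff Hleaf : forall c, 0 < c < nv H -> par H c <> v.
    by have := Hc v Hv Hleaf; rewrite /honest_vertex E honest_idx_rcons_size orbF (negbTE Hv0).
  move=> c Hc' Hpc; have := valid_fork_lab_par HH Hc'; rewrite Hpc E.
  have := @valid_fork_lab_le _ _ c HH ltac:(lia); rewrite size_rcons; lia.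
have HV : valid_fork w H.
  case: HH => H0 H1 H2 H3 H4; split=> //.
  - by move=> v Hv; case: (H2 v Hv) => A B _; split=> //; apply: Hle; lia.
  - by move=> i Hi; apply: H3; rewrite honest_idx_rcons //; case/andP: Hi => /andP [].
  - by move=> a b Ha Hb Hha Hhb; apply: H4; rewrite ?honest_idx_rcons ?Hle.
split=> // v Hv Hleaf; rewrite -(honest_vertex_rcons true); [exact: Hc | exact: Hle].
Qed.

Local Open Scope ring_scope.

Lemma rhoF_rcons1 w H : valid_fork w H -> rhoF (rcons w true) H = rhoF w H + 1.
Proof.
move=> HH; have Hle v := @valid_fork_lab_le w H v HH; have H0 : (0 < nv H)%N by case: HH.
apply/eqP; rewrite eq_le; apply/andP; split.
  apply: rhoF_le H0 => v Hv; rewrite reach_rcons ?Hle // lerD2r; exact: reach_le_rhoF.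
have [v Hv <-] := rhoF_attained w H0.
by rewrite -(reach_rcons true) ?Hle //; exact: reach_le_rhoF.
Qed.

Lemma muF_rcons1_le w k H c : valid_fork w H -> muF w k H <= c ->
  muF (rcons w true) k H <= c + 1.
Proof.
move=> HH Hc; have Hle v := @valid_fork_lab_le w H v HH; have H0 : (0 < nv H)%N by case: HH.
apply: muF_le H0 => a b Ha Hb Hd; rewrite !reach_rcons ?Hle //=.
have := le_trans (min_reach_le_muF w Ha Hb Hd) Hc.
by rewrite !ge_min => /orP [A|A]; apply/orP; [left|right]; rewrite lerD2r.
Qed.

Lemma optimal_rcons1 w F : optimal_fork w F -> optimal_fork (rcons w true) F.
Proof.
move=> [HV HCl [t Ht /andP [Hth /eqP Htr]] HR HM].
have Hle v := @valid_fork_lab_le w F v HV.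
have HV1 := valid_fork_rcons1 HV; have HC1 := closed_rcons true HV HCl.
have Hrho := rhoF_rcons1 HV.
have HR1 : forall G, valid_fork (rcons w true) G -> closed (rcons w true) G ->
    rhoF (rcons w true) G <= rhoF (rcons w true) F.
  move=> G HG HGc; have [HG' HGc'] := valid_closed_rcons1 HG HGc.
  by rewrite rhoF_rcons1 // Hrho lerD2r; apply: HR.
split=> //.
  by exists t => //; rewrite honest_vertex_rcons ?Hle // Hth reach_rcons ?Hle // Hrho Htr /=.
move=> k; rewrite size_rcons ltnS leq_eqVlt => /orP [/eqP -> | Hk].
  apply: (mu_witnessed_of_bound (c := rhoF (rcons w true) F)) => // [|G HG HGc].
    exists t, t; split=> //; first by rewrite honest_vertex_rcons ?Hle ?Hth.
      apply/(disjoint_overP HV) => x Hx _; apply: Hle.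
      exact: (path_up_lt (valid_fork_rooted HV) Ht Hx).
    by rewrite reach_rcons ?Hle // Hrho Htr.
  by apply: le_trans (HR1 G HG HGc); apply: muF_le_rhoF; case: HG.
have [[t1 [t2 [H1 H2 /andP [Hh1 Hh2] Hd [Hr1 Hr2]]]] HMk] := HM k Hk.
apply: (mu_witnessed_of_bound (c := muF w k F + 1)) => // [|G HG HGc].
  by exists t1, t2; rewrite !honest_vertex_rcons ?Hle ?Hh1 ?Hh2 // !reach_rcons ?Hle // Hr1 Hr2 Hrho.
have [HG' HGc'] := valid_closed_rcons1 HG HGc; apply: muF_rcons1_le => //; exact: HMk.
Qed.

Close Scope ring_scope.

(** * An honest symbol *)

Lemma diverge_le w F t r : (r < nv F)%N -> reach w F r = rhoF w F ->
  diverge w F t <= lab F (lca F t r).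
Proof.
move=> Hr Hrr; rewrite /diverge.
by apply: (@bigminn_le_cond _ _ _ _ (Ordinal Hr)); rewrite /= Hrr.
Qed.

Lemma diverge_witness w F t k : k < size w -> diverge w F t <= k ->
  exists2 r, (r < nv F)%N /\ reach w F r = rhoF w F & lab F (lca F t r) <= k.
Proof.
move=> Hk Hdk; have [j /eqP Hj Hjk] := bigminn_le_exists Hk Hdk.
by exists j; [split | ].
Qed.

Section Selection.
Variables (w : seq bool) (F : fork) (s : nat).
Hypothesis HV : valid_fork w F.
Hypothesis Hs : s < nv F.
Hypothesis Hsel : astar_select w F s.
Let HFr := valid_fork_rooted HV.

Lemma astar_select_reach0 t : t < nv F -> reach w F t = 0%R -> reach w F s = 0%R.
Proof.
move=> Ht Hr; have Hhas : has (fun v => reach w F v == 0%R) (iota 0 (nv F)).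
  by apply/hasP; exists t; rewrite ?mem_iota ?Hr.
by move: Hsel; rewrite /astar_select Hhas => -[].
Qed.

(* [s] diverges from the maximal-reach tines no later than [t2] does, hence before [k];
   an honest ancestor of the maximal tine it diverges from is still maximal. *)
Lemma astar_select_diverge k t1 t2 : k < size w -> t1 < nv F -> t2 < nv F ->
  reach w F t1 = rhoF w F -> reach w F t2 = 0%R -> disjoint_over F k t1 t2 ->
  exists h, [/\ h < nv F, honest_vertex w F h, reach w F h = rhoF w F &
    forall x, x \in path_up F h -> x \in path_up F s -> lab F x <= k].
Proof.
move=> Hk H1 H2 Hr1 Hr2 Hd.
have Hhas : has (fun v => reach w F v == 0%R) (iota 0 (nv F)).
  by apply/hasP; exists t2; rewrite ?mem_iota ?Hr2.
move: Hsel; rewrite /astar_select Hhas => -[_ Hmin _].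
have Hdk : diverge w F s <= k.
  apply: leq_trans (Hmin t2 H2 Hr2) (leq_trans (diverge_le _ H1 Hr1) _).
  have [C2 C1] := lca_path_up HV H2 H1.
  by move/(disjoint_overP HV): Hd; apply.
have [r [Hr Hrr] Hlca] := diverge_witness Hk Hdk.
have [h [Hh1 Hh2 Hh3]] := honest_ancestor HV Hr.
exists h; split=> //.
- exact: (path_up_lt HFr Hr Hh1).
- by apply/eqP; rewrite eq_le reach_le_rhoF ?(path_up_lt HFr Hr Hh1) //= -Hrr.
move=> x Hx1 Hx2; apply: leq_trans Hlca.
exact: (lab_le_lca HV Hs Hx2 (path_up_trans HFr Hr Hh1 Hx1)).
Qed.

End Selection.

Lemma cons_ext_subfork w F s F' : cons_ext w F s F' -> subfork F F'.
Proof.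
case=> m [Hnv [Hlab [Hpar _]]]; exists id; split=> // v Hv.
by rewrite Hnv; lia.
Qed.

Section ConservativeExtension.
Variables (w : seq bool) (F F' : fork) (s m : nat).
Let n := size w.
Let w0 := rcons w false.
Let u := nv F + m.
Hypothesis HV : valid_fork w F.
Hypothesis Hs : s < nv F.
Hypothesis Hnv : nv F' = nv F + m.+1.
Hypothesis Hlab' : forall v, v < nv F -> lab F' v = lab F v.
Hypothesis Hpar' : forall v, 0 < v < nv F -> par F' v = par F v.
Hypothesis Hps : par F' (nv F) = s.
Hypothesis Hpj : forall j, 0 < j <= m -> par F' (nv F + j) = (nv F + j).-1.
Hypothesis Hlu : lab F' u = n.+1.
Hypothesis Hdu : depth F' u = (height F).+1.
Hypothesis HV' : valid_fork w0 F'.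
Hypothesis HC' : closed w0 F'.

Let HFr := valid_fork_rooted HV.
Let HFr' := valid_fork_rooted HV'.
Let Hle v := @valid_fork_lab_le w F v HV.

Lemma ext_old_lt v : v < nv F -> v < nv F'.
Proof. by rewrite Hnv; lia. Qed.

Lemma ext_top_lt : u < nv F'.
Proof. by rewrite Hnv /u; lia. Qed.

Lemma ext_old_vertex v : v < nv F -> path_up F' v = path_up F v /\ depth F' v = depth F v.
Proof.
elim/ltn_ind: v => v IH Hv.
case: (posnP v) => [->|H0]; first by rewrite !path_up_root.
have Hv1 : 0 < v < nv F by rewrite H0.
have Hv2 : 0 < v < nv F' by rewrite H0 ext_old_lt.
have Hp := par_lt HFr Hv1; have [IH1 IH2] := IH _ Hp ltac:(lia).
rewrite (path_up_par HFr' Hv2) (path_up_par HFr Hv1) (depth_par HFr' Hv2) (depth_par HFr Hv1).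
by rewrite Hpar' // IH1 IH2.
Qed.

Lemma ext_new_vertex j : j <= m -> depth F' (nv F + j) = depth F s + j + 1 /\
  (forall x, x \in path_up F' (nv F + j) -> x < nv F -> x \in path_up F s).
Proof.
elim: j => [|j IH] Hj.
  have Hv : 0 < nv F + 0 < nv F' by rewrite Hnv addn0; have := HFr.1; lia.
  rewrite (depth_par HFr' Hv) addn0 Hps (ext_old_vertex Hs).2; split; first lia.
  move=> x Hx Hxn; rewrite addn0 in Hv Hx.
  have := path_up_parP HFr' Hv Hx; rewrite Hps (ext_old_vertex Hs).1.
  by case=> // E; rewrite E in Hxn; lia.
have [IH1 IH2] := IH ltac:(lia).
have Hv : 0 < nv F + j.+1 < nv F' by rewrite Hnv; lia.
have Hpj' : par F' (nv F + j.+1) = nv F + j by rewrite Hpj; lia.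
rewrite (depth_par HFr' Hv) Hpj' IH1; split; first lia.
move=> x Hx Hxn; have := path_up_parP HFr' Hv Hx; rewrite Hpj'.
by case=> [E|Hx']; [rewrite E in Hxn; lia | exact: IH2].
Qed.

Lemma ext_height : height F' = (height F).+1.
Proof.
apply/eqP; rewrite eqn_leq -{2}Hdu depth_le_height ?ext_top_lt // andbT.
apply: height_le => v; rewrite Hnv => Hv; case: (ltnP v (nv F)) => Hvn.
  by rewrite (ext_old_vertex Hvn).2; apply: leqW; apply: depth_le_height.
have -> : v = nv F + (v - nv F) by lia.
rewrite (ext_new_vertex (j := v - nv F) ltac:(lia)).1.
have := (ext_new_vertex (leqnn m)).1; rewrite -/u Hdu; lia.
Qed.

Lemma ext_reach v : v < nv F -> reach w0 F' v = (reach w F v - 1)%R.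
Proof.
move=> Hv; rewrite !reachE Hlab' // adv_after_rcons ?Hle // ext_height (ext_old_vertex Hv).2.
have := depth_le_height Hv; lia.
Qed.

Lemma ext_reach_top : reach w0 F' u = 0%R.
Proof.
by rewrite reachE Hlu -(size_rcons w false) adv_after_size Hdu ext_height; lia.
Qed.

Lemma ext_honest v : v < nv F -> honest_vertex w0 F' v = honest_vertex w F v.
Proof. by move=> Hv; rewrite /honest_vertex Hlab' // honest_idx_rcons ?Hle. Qed.

Lemma ext_honest_top : honest_vertex w0 F' u.
Proof. by rewrite /honest_vertex Hlu honest_idx_rcons_size orbT. Qed.

Lemma ext_disjoint_over k a b : a < nv F -> b < nv F ->
  disjoint_over F' k a b = disjoint_over F k a b.
Proof.
move=> Ha Hb; apply/(disjoint_overP HV')/(disjoint_overP HV) => H x Hxa Hxb.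
  have Hx := path_up_lt HFr Ha Hxa.
  by rewrite -Hlab' //; apply: H; rewrite ?(ext_old_vertex Ha).1 ?(ext_old_vertex Hb).1.
have Hx : x < nv F by move: Hxa; rewrite (ext_old_vertex Ha).1 => /(path_up_lt HFr Ha).
by rewrite Hlab' //; apply: H; rewrite -?(ext_old_vertex Ha).1 -?(ext_old_vertex Hb).1.
Qed.

Lemma ext_disjoint_over_top k a : a < nv F ->
  (forall x, x \in path_up F a -> x \in path_up F s -> lab F x <= k) ->
  disjoint_over F' k a u.
Proof.
move=> Ha H; apply/(disjoint_overP HV') => x Hxa Hxu.
have Hx : x < nv F by move: Hxa; rewrite (ext_old_vertex Ha).1 => /(path_up_lt HFr Ha).
rewrite Hlab' //; apply: H; first by rewrite -(ext_old_vertex Ha).1.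
exact: (ext_new_vertex (leqnn m)).2.
Qed.

Lemma ext_disjoint_over_old_size a b : a < nv F -> disjoint_over F' n a b.
Proof.
move=> Ha; apply/(disjoint_overP HV') => x Hx _; rewrite (ext_old_vertex Ha).1 in Hx.
by rewrite Hlab' ?Hle ?(path_up_lt HFr Ha Hx).
Qed.

Hypothesis HO : optimal_fork w F.
Hypothesis Hsel : astar_select w F s.

Local Open Scope ring_scope.

Lemma ext_rhoF : rhoF w0 F' = Order.max (rhoF w F - 1) 0.
Proof.
have [_ _ [t0 Ht0 /andP [_ /eqP Ht0r]] HR _] := HO.
apply/eqP; rewrite eq_le (rhoF_rcons0_le HR HV') /= ge_max.
rewrite -{1}Ht0r -(ext_reach Ht0) reach_le_rhoF ?ext_old_lt //=.
by rewrite -ext_reach_top reach_le_rhoF ?ext_top_lt.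
Qed.

Lemma ext_rho_witness :
  exists2 t, (t < nv F')%N & honest_vertex w0 F' t && (reach w0 F' t == rhoF w0 F').
Proof.
have [_ _ [t0 Ht0 /andP [Ht0h /eqP Ht0r]] _ _] := HO.
rewrite ext_rhoF maxEle; case: ifP => Hr.
  by exists u; rewrite ?ext_top_lt // ext_honest_top ext_reach_top eqxx.
exists t0; first exact: ext_old_lt.
by rewrite ext_honest // Ht0h ext_reach // Ht0r eqxx.
Qed.

Lemma ext_mu_size : mu_witnessed w0 n F'.
Proof.
have [_ _ [t0 Ht0 /andP [Ht0h /eqP Ht0r]] HR _] := HO.
have [T HT /andP [HTh /eqP HTr]] := ext_rho_witness.
apply: (mu_witnessed_of_bound (c := rhoF w F - 1)) => // [|G HG _].
  exists T, t0; split=> //.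
  - exact: ext_old_lt.
  - by rewrite HTh ext_honest.
  - by apply: (disjoint_over_sym HV'); exact: ext_disjoint_over_old_size.
  - by split=> //; rewrite ext_reach // Ht0r.
exact: muF_rcons0_size_le HR HG.
Qed.

Lemma ext_witness_rho_pos k : (k < n)%N -> 1 <= rhoF w F ->
  witness_pair w0 k F' (mu_next (rhoF w F) (muF w k F)).
Proof.
move=> Hk Hpos; have [_ _ _ _ HM] := HO.
have [[t1 [t2 [H1 H2 /andP [Hh1 Hh2] Hd [Hr1 Hr2]]]] _] := HM k Hk.
have Hrho' : rhoF w0 F' = rhoF w F - 1 by rewrite ext_rhoF maxEle; case: ifP; lia.
rewrite /mu_next; case: ifP => [/andP [/eqP Em _]|_].
  have [h [Hh Hhh Hhr Hhs]] := astar_select_diverge HV Hs Hsel Hk H1 H2 Hr1 (etrans Hr2 Em) Hd.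
  exists h, u; split.
  - exact: ext_old_lt.
  - exact: ext_top_lt.
  - by rewrite ext_honest // Hhh ext_honest_top.
  - exact: ext_disjoint_over_top.
  - by rewrite ext_reach // Hhr Hrho' ext_reach_top.
exists t1, t2; split.
- exact: ext_old_lt.
- exact: ext_old_lt.
- by rewrite !ext_honest // Hh1 Hh2.
- by rewrite ext_disjoint_over.
- by rewrite !ext_reach // Hr1 Hr2 Hrho'.
Qed.

Lemma ext_witness_rho0 k : (k < n)%N -> rhoF w F = 0 ->
  witness_pair w0 k F' (mu_next (rhoF w F) (muF w k F)).
Proof.
move=> Hk Er; have [_ _ _ _ HM] := HO.
have [[t1 [t2 [H1 H2 /andP [Hh1 Hh2] Hd [Hr1 Hr2]]]] _] := HM k Hk.
have Hrho' : rhoF w0 F' = 0 by rewrite ext_rhoF Er maxEle.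
have Hs0 : reach w F s = 0 := astar_select_reach0 Hsel H1 (etrans Hr1 Er).
rewrite /mu_next Er; case: (muF w k F =P 0) => [Em|/eqP Hmn] /=.
  have [h [Hh Hhh Hhr Hhs]] := astar_select_diverge HV Hs Hsel Hk H1 H2 Hr1 (etrans Hr2 Em) Hd.
  exists u, h; split.
  - exact: ext_top_lt.
  - exact: ext_old_lt.
  - by rewrite ext_honest_top (ext_honest Hh) Hhh.
  - by apply: (disjoint_over_sym HV'); exact: ext_disjoint_over_top.
  - by rewrite ext_reach_top Hrho' ext_reach // Hhr Er Em ltxx.
have Hmneg : muF w k F < 0 by rewrite lt_neqAle Hmn -Er muF_le_rhoF //; case: HV.
exists u, t2; split.
- exact: ext_top_lt.
- exact: ext_old_lt.
- by rewrite ext_honest_top (ext_honest H2) Hh2.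
- apply: (disjoint_over_sym HV'); apply: ext_disjoint_over_top => // x Hx2 Hxs.
  (* Otherwise [t1] and [s] would be disjoint over [k], and both have reach [0]. *)
  rewrite leqNgt; apply/negP => Hkx.
  have := min_reach_le_muF w H1 Hs (disjoint_over_switch HV H1 H2 Hs Hd Hx2 Hxs Hkx).
  by rewrite Hr1 Hs0 Er minxx; lia.
- by rewrite ext_reach_top Hrho' ext_reach // Hr2.
Qed.

Lemma ext_mu k : (k < n)%N -> mu_witnessed w0 k F'.
Proof.
move=> Hk; have [_ _ _ HR HM] := HO; have [_ HMk] := HM k Hk.
apply: (mu_witnessed_of_bound (c := mu_next (rhoF w F) (muF w k F))) => // [|G HG _].
  case: (lerP 1 (rhoF w F)) => Hr1; first exact: ext_witness_rho_pos.
  apply: ext_witness_rho0 => //; apply/eqP; rewrite eq_le rhoF_ge0 ?andbT; [lia | by case: HV].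
exact: muF_rcons0_le Hk HR HMk HG.
Qed.

Lemma ext_optimal : optimal_fork w0 F'.
Proof.
have [_ _ _ HR _] := HO.
split=> //; first exact: ext_rho_witness.
  by move=> G HG _; rewrite ext_rhoF; exact: rhoF_rcons0_le HR HG.
move=> k; rewrite size_rcons ltnS leq_eqVlt => /orP [/eqP -> | Hk].
  exact: ext_mu_size.
exact: ext_mu.
Qed.

End ConservativeExtension.

Lemma optimal_cons_ext w F s F' : optimal_fork w F -> s < nv F -> astar_select w F s ->
  cons_ext w F s F' -> optimal_fork (rcons w false) F'.
Proof.
move=> HO Hs Hsel [m [Hnv [Hlab' [Hpar' [Hps [Hpj [_ [Hlu [Hdu [HV' HC']]]]]]]]]].
have [HV _ _ _ _] := HO.
exact: (ext_optimal HV Hs Hnv Hlab' Hpar' Hps Hpj Hlu Hdu HV' HC' HO Hsel).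
Qed.

Theorem theorem5 (w : seq bool) (b : bool) (F F' : fork) :
  astar_run w F -> astar_step w F b F' ->
  canonical w F -> canonical (rcons w b) F'.
Proof.
move=> _ Hstep HC; have HO := canonical_optimal HC.
case: b Hstep => /= [-> | [s [Hs Hsel Hext]]].
  by apply: canonical_rcons HC _ (optimal_rcons1 HO); exists id.
exact: canonical_rcons HC (cons_ext_subfork Hext) (optimal_cons_ext HO Hs Hsel Hext).
Qed.
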